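(* Let $n_x,n_v,N\ge 1$, $\Delta t,\Delta x,\Delta v,w>0$, velocities $v_1,\dots,v_{n_v}\in\mathbb{R}$, a matrix $\mathsf{C}\in\mathbb{R}^{n_x\times n_x}$, an initial state $\mathsf{f}^0\in\mathbb{R}^{n_x\times n_v}$ and a target $\mathsf{f}^{\mathrm{eq}}\in\mathbb{R}^{n_x\times n_v}$. All indices are periodic (modulo $n_x$ in the first, modulo $n_v$ in the second index). For $\mathsf{H}\in\mathbb{R}^{n_x}$ define the forward scheme, for $n=0,\dots,N-1$: (i) $\mathsf{f}^{n,\star}_{:,j}=S_{-v_j\Delta t/(2\Delta x)}\,\mathsf{f}^n_{:,j}$ for each $j$; (ii) $\mathsf{E}^{n,\star}=\mathsf{C}(\mathbf{1}-\rho^{n,\star})$ with $\rho^{n,\star}_i=w\sum_j\mathsf{f}^{n,\star}_{ij}$, and $\sigma^n_i=(\mathsf{E}^{n,\star}_i+\mathsf{H}_i)\Delta t/\Delta v$; (iii) $\mathsf{f}^{n,\star\star}_{i,:}=S_{\sigma^n_i}\,\mathsf{f}^{n,\star}_{i,:}$ for each $i$ (acting on the row viewed as a vector in $\mathbb{R}^{n_v}$); (iv) $\mathsf{f}^{n+1}_{:,j}=S_{-v_j\Delta t/(2\Delta x)}\,\mathsf{f}^{n,\star\star}_{:,j}$ for each $j$; and let $\mathsf{J}(\mathsf{H})=\frac{\Delta x\Delta v}{2}\sum_{i,j}|\mathsf{f}^N_{ij}-\mathsf{f}^{\mathrm{eq}}_{ij}|^2$. Define the adjoint recursion: $\mathsf{g}^N=\mathsf{f}^N-\mathsf{f}^{\mathrm{eq}}$,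 and for $n=N-1,\dots,0$: $\mathsf{g}^{n,\star\star}_{:,j}=S_{-v_j\Delta t/(2\Delta x)}^{\top}\mathsf{g}^{n+1}_{:,j}$; $D^n_{ij}=\frac{\Delta t}{\Delta v}\big(\mathsf{f}^{n,\star}_{i,j+\mathrm{n}(\sigma^n_i)+1}-\mathsf{f}^{n,\star}_{i,j+\mathrm{n}(\sigma^n_i)}\big)\mathsf{g}^{n,\star\star}_{ij}$, $d^n_i=\sum_j D^n_{ij}$; $\mathsf{g}^{n,\star}_{kl}=\big(S_{\sigma^n_k}^{\top}\mathsf{g}^{n,\star\star}_{k,:}\big)_l-w\,(\mathsf{C}^{\top}d^n)_k$; $\mathsf{g}^{n}_{:,j}=S_{-v_j\Delta t/(2\Delta x)}^{\top}\mathsf{g}^{n,\star}_{:,j}$. Then, at any $\mathsf{H}$ for which no $\sigma^n_i$ ($0\le n<N$, $1\le i\le n_x$) is an integer, $\mathsf{J}$ is differentiable and $$\frac{\partial\mathsf{J}}{\partial\mathsf{H}_i}=\Delta x\,\Delta v\sum_{n=0}^{N-1}d^n_i,\qquad i=1,\dots,n_x .$$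
   Context: For an integer $m\ge 2$ and $s\in\mathbb{R}$, write $\mathrm{n}(s)=\lfloor s\rfloor$, $\alpha(s)=s-\lfloor s\rfloor$, and let $S_s\in\mathbb{R}^{m\times m}$ be given by $(S_su)_k=(1-\alpha(s))u_{k+\mathrm{n}(s)}+\alpha(s)u_{k+\mathrm{n}(s)+1}$ with indices mod $m$ (here $m=n_x$ for the $x$-steps and $m=n_v$ for the $v$-step). The forward scheme is the Strang-split semi-Lagrangian discretization (half step in $x$, full step in $v$ with the self-consistent field plus external field $\mathsf{H}$, half step in $x$) of the 1D Vlasov–Poisson equation $\partial_tf+v\partial_xf-(H+E[f])\partial_vf=0$; $\mathsf{g}^n,\mathsf{g}^{n,\star},\mathsf{g}^{n,\star\star}$ are the discrete adjoint states (Lagrange multipliers). *)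

From HB Require Import structures.
From mathcomp Require Import all_boot all_order all_algebra.
From mathcomp Require Import all_classical all_reals all_analysis.
Set Implicit Arguments. Unset Strict Implicit. Unset Printing Implicit Defensive.
Import Order.TTheory GRing.Theory Num.Theory.
Import numFieldNormedType.Exports.
Local Open Scope ring_scope.

Section VP.
Variable R : realType.

Definition pidx (m : nat) (k : 'I_m) (z : int) : 'I_m :=
  insubd k (absz ((k%:Z + z) %% m%:Z)%Z).

Definition nfl (s : R) : int := Num.floor s.
Definition alph (s : R) : R := s - (nfl s)%:~R.

(* the interpolation matrix S_s : (S_s u)_k = (1-a) u_{k+n} + a u_{k+n+1} *)
Definition Smx (m : nat) (s : R) : 'M[R]_m :=
  \matrix_(k, l) ((1 - alph s) * (l == pidx k (nfl s))%:R
                  + alph s * (l == pidx k (nfl s + 1))%:R).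

Variables (nx nv : nat) (dt dx dv w : R) (v : 'I_nv -> R) (C : 'M[R]_nx).

Definition xshift (j : 'I_nv) : R := - v j * dt / (2 * dx).

Definition xstep (f : 'M[R]_(nx, nv)) : 'M[R]_(nx, nv) :=
  \matrix_(i, j) (Smx nx (xshift j) *m col j f) i 0.

Definition xstepT (g : 'M[R]_(nx, nv)) : 'M[R]_(nx, nv) :=
  \matrix_(i, j) ((Smx nx (xshift j))^T *m col j g) i 0.

Definition rho (fs : 'M[R]_(nx, nv)) : 'cV[R]_nx :=
  \col_i (w * \sum_j fs i j).

Definition Efield (fs : 'M[R]_(nx, nv)) : 'cV[R]_nx :=
  C *m (const_mx 1 - rho fs).

Definition sigma (H : 'cV[R]_nx) (fs : 'M[R]_(nx, nv)) (i : 'I_nx) : R :=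
  (Efield fs i 0 + H i 0) * dt / dv.

Definition vstep (H : 'cV[R]_nx) (fs : 'M[R]_(nx, nv)) : 'M[R]_(nx, nv) :=
  \matrix_(i, j) (Smx nv (sigma H fs i) *m (row i fs)^T) j 0.

Definition fstep (H : 'cV[R]_nx) (f : 'M[R]_(nx, nv)) : 'M[R]_(nx, nv) :=
  xstep (vstep H (xstep f)).

Variables (N : nat) (f0 feq : 'M[R]_(nx, nv)).

Definition fn (H : 'cV[R]_nx) (n : nat) : 'M[R]_(nx, nv) := iter n (fstep H) f0.
Definition fstar (H : 'cV[R]_nx) (n : nat) : 'M[R]_(nx, nv) := xstep (fn H n).
Definition sig (H : 'cV[R]_nx) (n : nat) (i : 'I_nx) : R := sigma H (fstar H n) i.

Definition Jcost (H : 'cV[R]_nx) : R :=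
  dx * dv / 2 * \sum_i \sum_j (fn H N i j - feq i j) ^+ 2.

Definition Dmat (H : 'cV[R]_nx) (n : nat) (g1 : 'M[R]_(nx, nv)) : 'M[R]_(nx, nv) :=
  let gss := xstepT g1 in
  \matrix_(i, j) (dt / dv *
     (fstar H n i (pidx j (nfl (sig H n i) + 1)) - fstar H n i (pidx j (nfl (sig H n i))))
     * gss i j).

Definition dvec (H : 'cV[R]_nx) (n : nat) (g1 : 'M[R]_(nx, nv)) : 'cV[R]_nx :=
  \col_i \sum_j Dmat H n g1 i j.

Definition gstep (H : 'cV[R]_nx) (n : nat) (g1 : 'M[R]_(nx, nv)) : 'M[R]_(nx, nv) :=
  let gss := xstepT g1 in
  let gs := \matrix_(k, l) (((Smx nv (sig H n k))^T *m (row k gss)^T) l 0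
                             - w * (C^T *m dvec H n g1) k 0) in
  xstepT gs.

(* grec m = g^{N-m} *)
Fixpoint grec (H : 'cV[R]_nx) (m : nat) : 'M[R]_(nx, nv) :=
  match m with
  | 0 => fn H N - feq
  | m'.+1 => gstep H (N - m'.+1) (grec H m')
  end.

Definition gadj (H : 'cV[R]_nx) (n : nat) : 'M[R]_(nx, nv) := grec H (N - n).

Definition dn (H : 'cV[R]_nx) (n : nat) : 'cV[R]_nx := dvec H n (gadj H n.+1).

End VP.

(* The scheme depends on H only through the interpolation weights alpha(sigma)
   and the integer shifts floor(sigma) of the velocity steps.  When no sigma^n_i
   is an integer, continuity makes every floor locally constant, so near H the
   cost J coincides with the cost Jz of the "frozen" scheme whose shifts are the
   fixed integers z^n_i = floor(sigma^n_i(H)).  The frozen scheme is polynomial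
   in H, hence differentiable, and forward-mode differentiation along e_i gives
   dJz = dx dv <f^N - f^eq, df^N> for the tangent recursion df^n.  The discrete
   adjoint is the transpose of one tangent step:
       <g^{n+1}, df^{n+1}> = d^n_i + <g^n, df^n>,
   and telescoping from n = N down to 0 (where df^0 = 0) gives the formula. *)
From HB Require Import structures.
From mathcomp Require Import all_boot all_order all_algebra.
From mathcomp Require Import all_classical all_reals all_analysis.
From mathcomp Require Import ring zify.
Import Order.TTheory GRing.Theory Num.Theory.
Import numFieldNormedType.Exports.
Local Open Scope ring_scope.

Set Implicit Arguments. Unset Strict Implicit. Unset Printing Implicit Defensive.

Section Locality.
Context {R : realType} {V : normedModType R}.

Lemma near_eq_differentiable (f g : V -> R) (x : V) :
  (\forall y \near x, f y = g y) -> differentiable f x -> differentiable g x.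
Proof.
move=> fg df.
have fgx : f x = g x by apply: (nbhs_singleton fg).
have g_expansion : g \o shift x = cst (g x) + 'd f x +o_ 0 id.
  apply/eqaddoP => eps eps0.
  have /eqadd_some_oP /(_ eps eps0) f_expansion := diff_locally df.
  have fg_shift : \forall h \near (0 : V), f (h + x) = g (h + x).
    by rewrite (near_shift x) /=; near do rewrite /= sub0r subrK //.
  apply: filterS2 fg_shift f_expansion => h fgh.
  by rewrite /= -fgx !fctE /= fgh.
have dg : 'd g x = 'd f x :> (V -> R).
  by apply: diff_unique => //; exact: diff_continuous.
apply/(diff_locallyP x g); rewrite dg; split => //; exact: diff_continuous.
Unshelve. all: by end_near. Qed.

(* A function continuous at x with a non-integer value there has a locally
   constant floor; this is what freezes the shifts of the velocity steps. *)
Lemma floor_locally_const (s : V -> R) (x : V) :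
  {for x, continuous s} -> ~ (exists z : int, s x = z%:~R) ->
  \forall y \near x, nfl (s y) = nfl (s x).
Proof.
move=> cs nonint.
have lo : (nfl (s x))%:~R < s x.
  rewrite lt_neqAle floor_le andbT; apply/eqP => eq_sx.
  by apply: nonint; exists (nfl (s x)); rewrite eq_sx.
have hi : s x < (nfl (s x) + 1)%:~R by rewrite floorD1_gt.
near=> y; apply: floor_def; apply/andP; split.
- by apply: ltW; near: y; exact: (cvgr_gt (s x) cs _ lo).
- by near: y; exact: (cvgr_lt (s x) cs _ hi).
Unshelve. all: by end_near. Qed.

End Locality.

Section DirectionalDerivative.
Context {R : realType} {V : normedModType R} (x e : V).

Definition has_dderiv (F : V -> R) (a : R) := differentiable F x /\ 'D_e F x = a.

Lemma dderiv_ext (F G : V -> R) a :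
  (forall y, F y = G y) -> has_dderiv F a -> has_dderiv G a.
Proof. by move=> /funext ->. Qed.

Lemma dderiv_eq F a b : a = b -> has_dderiv F a -> has_dderiv F b.
Proof. by move=> ->. Qed.

Lemma dderiv_cst c : has_dderiv (fun _ => c) 0.
Proof. split; [exact: differentiable_cst | exact: derive_cst]. Qed.

Lemma dderivD F G a b :
  has_dderiv F a -> has_dderiv G b -> has_dderiv (fun y => F y + G y) (a + b).
Proof.
move=> [dF <-] [dG <-]; split; first exact: differentiableD.
by rewrite (@deriveD _ _ _ F G) //; exact: diff_derivable.
Qed.

Lemma dderivN F a : has_dderiv F a -> has_dderiv (fun y => - F y) (- a).
Proof.
move=> [dF <-]; split; first exact: differentiableN.
by rewrite (@deriveN _ _ _ F) //; exact: diff_derivable.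
Qed.

Lemma dderivB F G a b :
  has_dderiv F a -> has_dderiv G b -> has_dderiv (fun y => F y - G y) (a - b).
Proof. by move=> dF dG; exact: (dderivD dF (dderivN dG)). Qed.

Lemma dderivM F G a b : has_dderiv F a -> has_dderiv G b ->
  has_dderiv (fun y => F y * G y) (F x * b + a * G x).
Proof.
move=> [dF <-] [dG <-]; split; first exact: differentiableM.
rewrite (@deriveM _ _ F G) //; try exact: diff_derivable.
by rewrite [G x *: _]mulrC.
Qed.

Lemma dderiv_mull c F a : has_dderiv F a -> has_dderiv (fun y => c * F y) (c * a).
Proof. by move=> dF; apply: dderiv_eq (dderivM (dderiv_cst c) dF); rewrite mul0r addr0. Qed.

Lemma dderiv_mulr c F a : has_dderiv F a -> has_dderiv (fun y => F y * c) (a * c).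
Proof. by move=> dF; apply: dderiv_eq (dderivM dF (dderiv_cst c)); rewrite mulr0 add0r. Qed.

Lemma dderiv_sum n (F : 'I_n -> V -> R) (a : 'I_n -> R) :
  (forall i, has_dderiv (F i) (a i)) ->
  has_dderiv (fun y => \sum_(i < n) F i y) (\sum_(i < n) a i).
Proof.
elim: n F a => [|n IH] F a dF.
  rewrite big_ord0; apply: dderiv_ext (dderiv_cst 0) => y.
  by rewrite big_ord0.
rewrite big_ord_recr; apply: dderiv_ext (dderivD (IH _ _ (fun i => dF _)) (dF ord_max)).
by move=> y; rewrite big_ord_recr.
Qed.

End DirectionalDerivative.

Section Interpolation.
Variable R : realType.

(* The interpolation matrix S_s written with its fractional part a and its
   integer shift z given separately, so that z can be frozen. *)
Definition Smxz (m : nat) (a : R) (z : int) : 'M[R]_m :=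
  \matrix_(k, l) ((1 - a) * (l == pidx k z)%:R + a * (l == pidx k (z + 1))%:R).

Lemma Smx_frozen m s : Smx m s = Smxz m (alph s) (nfl s).
Proof. by []. Qed.

Lemma sum_indicator m (p : 'I_m) (u : 'I_m -> R) : \sum_l (l == p)%:R * u l = u p.
Proof.
rewrite (bigD1 p) //= eqxx mul1r big1 ?addr0 // => l /negbTE ->.
by rewrite mul0r.
Qed.

Lemma Smxz_mul m a z (u : 'cV[R]_m) k :
  (Smxz m a z *m u) k 0 = (1 - a) * u (pidx k z) 0 + a * u (pidx k (z + 1)) 0.
Proof.
rewrite mxE; under eq_bigr do rewrite mxE mulrDl -!mulrA.
by rewrite big_split /= -!mulr_sumr !(sum_indicator _ (fun l => u l 0)).
Qed.

Definition ip m n (A B : 'M[R]_(m, n)) : R := \sum_i \sum_j A i j * B i j.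

Lemma sum_mul_transpose m (S : 'M[R]_m) (g u : 'I_m -> R) :
  \sum_l g l * (\sum_k S l k * u k) = \sum_k (\sum_l S l k * g l) * u k.
Proof.
under eq_bigr do rewrite mulr_sumr.
rewrite exchange_big /=; apply: eq_bigr => k _.
by rewrite mulr_suml; apply: eq_bigr => l _; ring.
Qed.

Lemma pairing_rowwise m n (S : 'I_m -> 'M[R]_n) (g f : 'M[R]_(m, n)) :
  \sum_k \sum_l g k l * (S k *m (row k f)^T) l 0
  = \sum_k \sum_l ((S k)^T *m (row k g)^T) l 0 * f k l.
Proof.
apply: eq_bigr => k _.
have -> : \sum_l g k l * (S k *m (row k f)^T) l 0
        = \sum_l g k l * \sum_j S k l j * f k j.
  apply: eq_bigr => l _; congr (_ * _); rewrite mxE; apply: eq_bigr => j _.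
  by rewrite [(row _ _)^T _ _]mxE [row _ _ _ _]mxE.
rewrite (sum_mul_transpose (S k) (fun l => g k l) (fun j => f k j)).
apply: eq_bigr => j _; congr (_ * _); rewrite mxE; apply: eq_bigr => l _.
by rewrite [(row _ _)^T _ _]mxE [row _ _ _ _]mxE [_^T j l]mxE.
Qed.

End Interpolation.

Section Scheme.
Variables (R : realType) (nx nv : nat) (dt dx dv w : R) (v : 'I_nv -> R).
Variables (C : 'M[R]_nx) (N : nat) (f0 feq : 'M[R]_(nx, nv)).

Local Notation V := 'cV[R]_nx.
Local Notation Mat := 'M[R]_(nx, nv).
Local Notation xs := (xstep dt dx v).
Local Notation xsT := (xstepT dt dx v).
Local Notation sg := (sigma dt dv w C).

Lemma xstepE (f : Mat) i j : xs f i j = \sum_l Smx nx (xshift dt dx v j) i l * f l j.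
Proof. by rewrite [LHS]mxE [LHS]mxE; apply: eq_bigr => l _; rewrite [col _ _ _ _]mxE. Qed.

Lemma ip_xstep (g f : Mat) : ip g (xs f) = ip (xsT g) f.
Proof.
rewrite /ip exchange_big [RHS]exchange_big /=; apply: eq_bigr => j _.
have -> : \sum_i g i j * xs f i j
        = \sum_i g i j * (\sum_l Smx nx (xshift dt dx v j) i l * f l j).
  by apply: eq_bigr => i _; rewrite xstepE.
rewrite sum_mul_transpose; apply: eq_bigr => l _; congr (_ * _).
by rewrite !mxE; apply: eq_bigr => k _; rewrite !mxE.
Qed.

Lemma sigmaE (H : V) (fs : Mat) i :
  sg H fs i = ((\sum_k C i k * (1 - w * \sum_j fs k j)) + H i 0) * dt / dv.
Proof.
rewrite /sigma /Efield mxE; congr ((_ + _) * _ / _).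
by apply: eq_bigr => k _; rewrite !mxE.
Qed.

Definition vstepz (zi : 'I_nx -> int) (H : V) (fs : Mat) : Mat :=
  \matrix_(i, j) ((1 - (sg H fs i - (zi i)%:~R)) * fs i (pidx j (zi i))
                  + (sg H fs i - (zi i)%:~R) * fs i (pidx j (zi i + 1))).

Lemma vstep_frozen zi H fs : (forall i, nfl (sg H fs i) = zi i) ->
  vstep dt dv w C H fs = vstepz zi H fs.
Proof.
move=> zE; apply/matrixP => i j.
by rewrite [LHS]mxE Smx_frozen Smxz_mul /alph zE !mxE.
Qed.

Section Frozen.
Variable z : nat -> 'I_nx -> int.

Fixpoint fnz (H : V) (n : nat) : Mat :=
  if n is n'.+1 then xs (vstepz (z n') H (xs (fnz H n'))) else f0.

Lemma fn_frozen H n :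
  (forall m i, (m < n)%N -> nfl (sig dt dx dv w v C f0 H m i) = z m i) ->
  fn dt dx dv w v C f0 H n = fnz H n.
Proof.
elim: n => [//|n IH] zE.
rewrite /fn /= -/(fn dt dx dv w v C f0 H n) /fstep (vstep_frozen (zi := z n)).
  by rewrite IH // => m i lt_mn; apply: zE; exact: ltnW.
by move=> i; exact: (zE n i (ltnSn n)).
Qed.

Definition Jz (y : V) : R := dx * dv / 2 * \sum_i \sum_j (fnz y N i j - feq i j) ^+ 2.

Section Tangent.
Variables (H0 : V) (i0 : 'I_nx).
Local Notation e := (delta_mx i0 0 : V).
Local Notation has_dd := (has_dderiv H0 e).

Lemma dderiv_coord k : has_dd (fun y : V => y k 0) (e k 0).
Proof.
split; first exact: differentiable_coord.
have dcoord := derive_mx (@derivable_id _ _ H0 e).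
by rewrite derive_id in dcoord; rewrite [in RHS]dcoord mxE.
Qed.

Lemma dderiv_xstep (F : V -> Mat) (dF : Mat) :
  (forall l j, has_dd (fun y => F y l j) (dF l j)) ->
  forall i j, has_dd (fun y => xs (F y) i j) (xs dF i j).
Proof.
move=> dFE i j; rewrite xstepE.
apply: dderiv_ext (dderiv_sum (fun l => dderiv_mull _ (dFE l j))) => y.
by rewrite xstepE.
Qed.

Definition dsig (dfs : Mat) (i : 'I_nx) : R :=
  (e i 0 - w * \sum_k C i k * \sum_j dfs k j) * dt / dv.

Lemma dderiv_sigma (F : V -> Mat) (dF : Mat) :
  (forall k j, has_dd (fun y => F y k j) (dF k j)) ->
  forall i, has_dd (fun y => sg y (F y) i) (dsig dF i).
Proof.
move=> dFE i.
have dsum : has_dd (fun y => \sum_k C i k * (1 - w * \sum_j F y k j))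
                   (\sum_k C i k * (0 - w * \sum_j dF k j)).
  apply: dderiv_sum => k; apply: dderiv_mull; apply: dderivB; first exact: dderiv_cst.
  by apply: dderiv_mull; apply: dderiv_sum => j; exact: dFE.
apply: dderiv_ext (dderiv_eq _ (dderiv_mulr _ (dderiv_mulr _ (dderivD dsum (dderiv_coord i))))).
  by move=> y; rewrite sigmaE.
rewrite /dsig addrC; congr ((_ + _) * _ / _).
rewrite mulr_sumr -sumrN; apply: eq_bigr => k _; ring.
Qed.

(* Tangent of the frozen velocity step: interpolation of the tangent plus the
   variation of the weight times the jump of f across the stencil. *)
Definition dvz (zi : 'I_nx -> int) (fs dfs : Mat) : Mat :=
  \matrix_(i, j)
    ((1 - (sg H0 fs i - (zi i)%:~R)) * dfs i (pidx j (zi i))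
     + (sg H0 fs i - (zi i)%:~R) * dfs i (pidx j (zi i + 1))
     + dsig dfs i * (fs i (pidx j (zi i + 1)) - fs i (pidx j (zi i)))).

Lemma dderiv_vstepz zi (F : V -> Mat) (dF : Mat) :
  (forall k j, has_dd (fun y => F y k j) (dF k j)) ->
  forall i j, has_dd (fun y => vstepz zi y (F y) i j) (dvz zi (F H0) dF i j).
Proof.
move=> dFE i j.
have dweight : has_dd (fun y => sg y (F y) i - (zi i)%:~R) (dsig dF i - 0).
  by apply: dderivB; [exact: dderiv_sigma | exact: dderiv_cst].
apply: dderiv_ext (dderiv_eq _ (dderivD
    (dderivM (dderivB (dderiv_cst _ _ 1) dweight) (dFE i (pidx j (zi i))))
    (dderivM dweight (dFE i (pidx j (zi i + 1)))))).
  by move=> y; rewrite mxE.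
by rewrite mxE; ring.
Qed.

Fixpoint df (n : nat) : Mat :=
  if n is n'.+1 then xs (dvz (z n') (xs (fnz H0 n')) (xs (df n'))) else 0.

Lemma dderiv_fnz n k j : has_dd (fun y => fnz y n k j) (df n k j).
Proof.
elim: n k j => [|n IH] k j /=; first by rewrite mxE; exact: dderiv_cst.
apply: dderiv_xstep => l j'; apply: dderiv_vstepz => k' j''.
exact: dderiv_xstep.
Qed.

Lemma dderiv_Jz :
  has_dd Jz (dx * dv * \sum_i \sum_j (fnz H0 N i j - feq i j) * df N i j).
Proof.
have dsq i j : has_dd (fun y => (fnz y N i j - feq i j) ^+ 2)
    (2 * ((fnz H0 N i j - feq i j) * df N i j)).
  apply: dderiv_ext (dderiv_eq _ (dderivM (dderivB (dderiv_fnz N i j) (dderiv_cst _ _ _))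
                                       (dderivB (dderiv_fnz N i j) (dderiv_cst _ _ _)))).
    by move=> y; rewrite expr2.
  by rewrite subr0; ring.
apply: dderiv_eq (dderiv_mull _ (dderiv_sum (fun i => dderiv_sum (dsq i)))).
under eq_bigr do rewrite -mulr_sumr.
by rewrite -mulr_sumr; field.
Qed.

End Tangent.
End Frozen.

Section Adjoint.
Variables (H0 : V) (i0 : 'I_nx).
Local Notation e := (delta_mx i0 0 : V).
Local Notation fst := (fstar dt dx dv w v C f0 H0).
Local Notation sgn := (sig dt dx dv w v C f0 H0).
Local Notation dvecH := (dvec dt dx dv w v C f0 H0).
Local Notation gad := (gadj dt dx dv w v C N f0 feq H0).

Definition zz (n : nat) (i : 'I_nx) : int := nfl (sgn n i).

Lemma fnz_zz n : fnz zz H0 n = fn dt dx dv w v C f0 H0 n.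
Proof. by rewrite (fn_frozen (z := zz)). Qed.

Definition fjump (n : nat) (k : 'I_nx) (l : 'I_nv) : R :=
  fst n k (pidx l (zz n k + 1)) - fst n k (pidx l (zz n k)).

Lemma dvecE n (g1 : Mat) k :
  dvecH n g1 k 0 = dt / dv * \sum_l fjump n k l * xsT g1 k l.
Proof. by rewrite mxE mulr_sumr; apply: eq_bigr => l _; rewrite mxE /fjump /zz; ring. Qed.

Lemma dvzE n (dfs : Mat) k l :
  dvz H0 i0 (zz n) (fst n) dfs k l
  = (Smx nv (sgn n k) *m (row k dfs)^T) l 0 + dsig i0 dfs k * fjump n k l.
Proof.
by rewrite [LHS]mxE Smx_frozen Smxz_mul ![(row _ _)^T _ _]mxE ![row _ _ _ _]mxE.
Qed.

Lemma pairing_field_term n (g1 dfs : Mat) :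
  \sum_k \sum_l xsT g1 k l * (dsig i0 dfs k * fjump n k l)
  = dvecH n g1 i0 0 - \sum_k \sum_l w * (C^T *m dvecH n g1) k 0 * dfs k l.
Proof.
have row_k k : \sum_l xsT g1 k l * (dsig i0 dfs k * fjump n k l)
    = (e k 0 - w * \sum_m C k m * \sum_j dfs m j) * dvecH n g1 k 0.
  have -> : \sum_l xsT g1 k l * (dsig i0 dfs k * fjump n k l)
          = dsig i0 dfs k * \sum_l fjump n k l * xsT g1 k l.
    by rewrite mulr_sumr; apply: eq_bigr => l _; ring.
  by rewrite dvecE /dsig; ring.
under eq_bigr do rewrite row_k mulrBl.
rewrite sumrB; congr (_ - _).
  under eq_bigr do rewrite mxE andbT.
  exact: (sum_indicator i0 (fun k => dvecH n g1 k 0)).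
transitivity (\sum_k \sum_m w * C k m * dvecH n g1 k 0 * \sum_j dfs m j).
  apply: eq_bigr => k _; rewrite -mulrA mulr_suml mulr_sumr.
  by apply: eq_bigr => m _; ring.
rewrite exchange_big /=; apply: eq_bigr => m _.
rewrite -mulr_suml mulr_sumr; apply: eq_bigr => l _; congr (_ * _).
rewrite [(C^T *m _) m 0]mxE mulr_sumr; apply: eq_bigr => k _.
by rewrite [C^T m k]mxE; ring.
Qed.

Definition gstar (n : nat) (g1 : Mat) : Mat :=
  \matrix_(k, l) (((Smx nv (sgn n k))^T *m (row k (xsT g1))^T) l 0
                  - w * (C^T *m dvecH n g1) k 0).

Lemma gstepE n g1 : gstep dt dx dv w v C f0 H0 n g1 = xsT (gstar n g1).
Proof. by []. Qed.

Lemma pairing_vstep n (g1 dfs : Mat) :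
  ip (xsT g1) (dvz H0 i0 (zz n) (fst n) dfs) = ip (gstar n g1) dfs + dvecH n g1 i0 0.
Proof.
have -> : ip (gstar n g1) dfs
  = \sum_k \sum_l ((Smx nv (sgn n k))^T *m (row k (xsT g1))^T) l 0 * dfs k l
    - \sum_k \sum_l w * (C^T *m dvecH n g1) k 0 * dfs k l.
  rewrite /ip -sumrB; apply: eq_bigr => k _; rewrite -sumrB; apply: eq_bigr => l _.
  by rewrite mxE mulrBl.
rewrite -pairing_rowwise -[RHS]addrA [X in _ + X]addrC -pairing_field_term.
rewrite /ip -big_split; apply: eq_bigr => k _; rewrite -big_split; apply: eq_bigr => l _.
by rewrite dvzE mulrDr.
Qed.

Lemma adjoint_step n (g1 : Mat) :
  ip g1 (df zz H0 i0 n.+1)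
  = dvecH n g1 i0 0 + ip (gstep dt dx dv w v C f0 H0 n g1) (df zz H0 i0 n).
Proof.
have -> : df zz H0 i0 n.+1 = xs (dvz H0 i0 (zz n) (fst n) (xs (df zz H0 i0 n))).
  by rewrite /= fnz_zz.
by rewrite ip_xstep pairing_vstep gstepE ip_xstep addrC.
Qed.

Lemma gadjS k : (k < N)%N -> gad k = gstep dt dx dv w v C f0 H0 k (gad k.+1).
Proof.
move=> lt_kN; rewrite /gadj.
have -> : (N - k = (N - k.+1).+1)%N by lia.
by rewrite /= (_ : (N - (N - k.+1).+1 = k)%N) //; lia.
Qed.

Lemma adjoint_sum k : (k <= N)%N ->
  ip (gad k) (df zz H0 i0 k) = \sum_(n < k) dn dt dx dv w v C N f0 feq H0 n i0 0.
Proof.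
elim: k => [_|k IH le_kN].
  by rewrite big_ord0 /ip big1 // => i _; rewrite big1 // => j _; rewrite /= mxE mulr0.
by rewrite big_ord_recr adjoint_step -IH ?(ltnW le_kN) // (gadjS le_kN) addrC.
Qed.

End Adjoint.

Section Gradient.
Variable H : V.
Hypothesis sig_nonint : forall (n : nat) (i : 'I_nx), (n < N)%N ->
  ~ exists z : int, sig dt dx dv w v C f0 H n i = z%:~R.

Local Notation sigH := (sig dt dx dv w v C f0).
Local Notation z := (zz H).

Lemma floors_locally_frozen n : (n <= N)%N ->
  \forall y \near H, forall m i, (m < n)%N -> nfl (sigH y m i) = z m i.
Proof.
elim: n => [_|n IH le_nN]; first by apply: filterE => y m i.
have frozen_before := IH (ltnW le_nN).
have frozen_n i : \forall y \near H, nfl (sigH y n i) = z n i.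
  (* sigma^n_i along the frozen scheme: smooth, and equal to the true one
     wherever the earlier floors are frozen. *)
  pose s y := sg y (xs (fnz z y n)) i.
  have ds : differentiable s H.
    by case: (dderiv_sigma (dderiv_xstep (dderiv_fnz z H i n)) i).
  have s_at_H : s H = sigH H n i by rewrite /s fnz_zz.
  have s_frozen : \forall y \near H, nfl (s y) = nfl (s H).
    apply: floor_locally_const; first exact: differentiable_continuous.
    by rewrite s_at_H; exact: sig_nonint.
  near=> y.
  have fr : forall m i, (m < n)%N -> nfl (sigH y m i) = z m i.
    by near: y; exact: frozen_before.
  have -> : sigH y n i = s y by rewrite /s -fn_frozen.
  rewrite -[z n i]/(nfl (sigH H n i)) -s_at_H.
  by near: y; exact: s_frozen.
have frozen_all := filter_forall _ frozen_n.
near=> y => m i lt_m.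
have fr_before : forall m i, (m < n)%N -> nfl (sigH y m i) = z m i.
  by near: y; exact: frozen_before.
have fr_n : forall i, nfl (sigH y n i) = z n i by near: y; exact: frozen_all.
by move: lt_m; rewrite ltnS leq_eqVlt => /orP[/eqP -> | /fr_before].
Unshelve. all: by end_near. Qed.

Lemma Jcost_locally_frozen : \forall y \near H, Jz z y = Jcost dt dx dv w v C N f0 feq y.
Proof.
near=> y.
have frozen : forall m i, (m < N)%N -> nfl (sigH y m i) = z m i.
  by near: y; exact: (floors_locally_frozen (leqnn N)).
by rewrite /Jz /Jcost (fn_frozen frozen).
Unshelve. all: by end_near. Qed.

Lemma adjoint_gradient : (0 < nx)%N ->
  differentiable (Jcost dt dx dv w v C N f0 feq) H /\
  forall i : 'I_nx, 'D_(delta_mx i 0) (Jcost dt dx dv w v C N f0 feq) H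
    = dx * dv * \sum_(n < N) dn dt dx dv w v C N f0 feq H n i 0.
Proof.
move=> nx_gt0; split.
  apply: near_eq_differentiable Jcost_locally_frozen _.
  by case: (dderiv_Jz z H (Ordinal nx_gt0)).
move=> i; rewrite -(near_eq_derive _ Jcost_locally_frozen).
case: (dderiv_Jz z H i) => _ ->.
rewrite -(adjoint_sum H i (leqnn N)); congr (_ * _); rewrite /ip.
apply: eq_bigr => k _; apply: eq_bigr => l _.
by rewrite fnz_zz /gadj subnn /= mxE [(- feq) k l]mxE.
Qed.

End Gradient.
End Scheme.

Theorem mainTheorem3 (R : realType) (nx nv N : nat)
  (Hnx : (0 < nx)%N) (Hnv : (0 < nv)%N) (HN : (0 < N)%N)
  (dt dx dv w : R) (Hdt : 0 < dt) (Hdx : 0 < dx) (Hdv : 0 < dv) (Hw : 0 < w)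
  (v : 'I_nv -> R) (C : 'M[R]_nx) (f0 feq : 'M[R]_(nx, nv)) (H : 'cV[R]_nx) :
  (forall (n : nat) (i : 'I_nx), (n < N)%N ->
      ~ exists z : int, sig dt dx dv w v C f0 H n i = z%:~R) ->
  differentiable (Jcost dt dx dv w v C N f0 feq) H /\
  forall i : 'I_nx,
    'D_(delta_mx i 0) (Jcost dt dx dv w v C N f0 feq) H
    = dx * dv * \sum_(n < N) dn dt dx dv w v C N f0 feq H n i 0.
Proof. by move=> sig_nonint; apply: adjoint_gradient. Qed.
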